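(* Assume (A1), (A2), (A3) (see context), and suppose $$\lim_{k\to+\infty}\big\|\mathbb P(\xi(\Lambda_{1/2})=0\mid\mathcal T_k)-\mathbb P(\xi(\Lambda_{1/2})=0)\big\|_\infty=0 .$$ Then there is $c>0$ with $\mathbb P(\xi(\Lambda_\ell)=0)\le e^{-c\ell^d}$ for all $\ell\ge1$. In particular $\mathbb P$ satisfies Condition $C(\alpha)$ for every $\alpha>0$.
   Context: $\Lambda_a=[-a,a]^d$. $\mathcal N$ = locally finite subsets of $\mathbb R^d$, identified with counting measures ($\xi(A)=\#(\xi\cap A)$), $\sigma$-algebra generated by $\xi\mapsto\xi(A)$; $\tau_x\xi:=\xi-x$. $\mathrm{DT}(\xi)$: graph on $\xi$ whose edges are pairs of points with Voronoi cells sharing a $(d-1)$-dimensional face. $\mathcal T_a$ is the $\sigma$-algebra on $\mathcal N$ of events determined by $\xi\cap\Lambda_a^c$; $\|\cdot\|_\infty$ is the $L^\infty(\mathbb P)$ norm. Setting: $(\Omega,\mathcal F,\mathcal P)$ with measurable $\mathbb R^d$-action $(\theta_x)$; simple point process $\omega\mapsto\hat\omega$ with law $\mathbb P$; measurable symmetric conductances $c_{x,y}(\omega)\ge0$ vanishing off edges of $\mathrm{DT}(\hat\omega)$. (A1) $\mathcal P$ $\theta$-invariant, $\mathcal P(\hat\omega=\emptyset)=0$; (A2) $m:=\mathbb E[\xi([0,1]^d)]\in(0,\infty)$; (A3) on a $\theta$-invariant measurable full-measure set, $\widehat{\theta_x\omega}=\tau_x\hat\omega$ and $c_{y-x,z-x}(\theta_x\omega)=c_{y,z}(\omega)$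 for all $x$ and edges $\{y,z\}$. Condition $C(\alpha)$: $\exists\kappa>0$ with $\mathbb P(\xi(\Lambda_\ell)=0)\le\kappa\ell^{-\alpha}$ for all $\ell\ge1$. *)

From HB Require Import structures.
From mathcomp Require Import all_boot all_order all_algebra.
From mathcomp Require Import all_classical all_reals all_analysis.
From mathcomp Require Import measurable_realfun ess_sup_inf.
Set Implicit Arguments. Unset Strict Implicit. Unset Printing Implicit Defensive.
Import Order.TTheory GRing.Theory Num.Theory.
Import numFieldNormedType.Exports.
Local Open Scope classical_set_scope.
Local Open Scope ring_scope.

Section Defs.
Context {R : realType} {d : nat}.

Definition box (a : R) : set 'rV[R]_d :=
  [set x | forall i, - a <= x ord0 i <= a].

Definition unit_cube : set 'rV[R]_d := [set x | forall i, 0 <= x ord0 i <= 1].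

Definition borelRd : set (set 'rV[R]_d) := <<s [set U | open U] >>.

Definition npts (xi A : set 'rV[R]_d) : \bar R := (\esum_(x in xi `&` A) 1)%E.

Definition translate (xi : set 'rV[R]_d) (x : 'rV[R]_d) : set 'rV[R]_d :=
  [set y - x | y in xi].

Context {dO : measure_display} {Omega : measurableType dO}.

Definition simple_point_process (hat : Omega -> set 'rV[R]_d) : Prop :=
  (forall w a, finite_set (hat w `&` box a)) /\
  (forall A, borelRd A -> measurable_fun [set: Omega] ((fun w => npts (hat w) A) : Omega -> \bar R)).

Definition measurable_action (theta : 'rV[R]_d -> Omega -> Omega) : Prop :=
  (forall w, theta 0 w = w) /\
  (forall x y w, theta (x + y) w = theta x (theta y w)) /\
  (forall x, measurable_fun setT (theta x)) /\
  (forall B : set Omega, measurable B ->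
     <<s [set S | exists A C, borelRd A /\ measurable C /\ S = A `*` C] >>
       [set p | B (theta p.1 p.2)]).

Definition A1 (P : probability Omega R) (theta : 'rV[R]_d -> Omega -> Omega)
  (hat : Omega -> set 'rV[R]_d) : Prop :=
  (forall x B, measurable B -> P (theta x @^-1` B) = P B) /\
  P [set w | hat w = set0] = 0%E.

Definition A2 (P : probability Omega R) (hat : Omega -> set 'rV[R]_d) : Prop :=
  (0 < \int[P]_w npts (hat w) unit_cube < +oo)%E.

Definition A3 (P : probability Omega R) (theta : 'rV[R]_d -> Omega -> Omega)
  (hat : Omega -> set 'rV[R]_d) : Prop :=
  exists Omega0 : set Omega, measurable Omega0 /\ P Omega0 = 1%E /\
    (forall x w, Omega0 (theta x w) <-> Omega0 w) /\
    (forall x w, Omega0 w -> hat (theta x w) = translate (hat w) x).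

(* T_a pulled back to Omega: generated by omega |-> xi(A cap Lambda_a^c) *)
Definition tail_sigma (hat : Omega -> set 'rV[R]_d) (a : R) : set (set Omega) :=
  <<s [set S | exists A (E : set (\bar R)), borelRd A /\ measurable E /\
        S = (fun w => npts (hat w) (A `&` ~` box a)) @^-1` E] >>.

Definition cond_prob_version (P : probability Omega R) (G : set (set Omega))
  (V : set Omega) (g : Omega -> R) : Prop :=
  (forall Y : set R, measurable Y -> G (g @^-1` Y)) /\
  P.-integrable setT (EFin \o g) /\
  (forall B, G B -> (\int[P]_(w in B) (g w)%:E = P (V `&` B))%E).

Definition void_event (hat : Omega -> set 'rV[R]_d) (l : R) : set Omega :=
  [set w | npts (hat w) (box l) = 0%E].

Definition condC (P : probability Omega R) (hat : Omega -> set 'rV[R]_d)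
  (alpha : R) : Prop :=
  exists kappa : R, 0 < kappa /\
    forall l : R, 1 <= l -> (P (void_event hat l) <= (kappa * l `^ (- alpha))%:E)%E.

End Defs.

From HB Require Import structures.
From mathcomp Require Import all_boot all_order all_algebra.
From mathcomp Require Import all_classical all_reals all_analysis.
From mathcomp Require Import measurable_realfun ess_sup_inf.
From mathcomp Require Import ring lra.
Import Order.TTheory GRing.Theory Num.Theory.
Import numFieldNormedType.Exports.
Set Implicit Arguments. Unset Strict Implicit. Unset Printing Implicit Defensive.
Local Open Scope classical_set_scope.
Local Open Scope ring_scope.

(* Write [p] for the probability that the sup-norm ball of radius 1/2 around the origin
   (i.e. Λ_{1/2}) is empty.  Translation invariance and P(ξ = ∅) = 0 force p < 1: otherwise
   a.s. every such ball, hence every box, would be empty.  By the mixing hypothesis there is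
   a [k] such that, conditionally on the configuration outside Λ_k, the ball at the origin
   is empty with probability at most q := (1 + p) / 2 < 1.  Given points pairwise farther
   apart than k + 1/2, translate one of them to the origin: the emptiness of the other balls
   is then T_k-measurable, so emptiness of all balls costs a factor q per point.  A grid of
   spacing k + 1 puts about (ℓ / 2(k + 1))^d such points in Λ_ℓ, whence P(ξ(Λ_ℓ) = 0) decays
   like q^(c ℓ^d); C(α) follows since exponentials beat powers. *)

Lemma g_sigma_setT (T : Type) (G : set (set T)) : <<s G>> setT.
Proof.
by have [] := (sigma_algebraP (fun X _ => @subsetT _ X)).1 (smallest_sigma_algebra setT G).
Qed.

Lemma g_sigma_setI (T : Type) (G : set (set T)) : setI_closed <<s G>>.
Proof.
by have [] := (sigma_algebraP (fun X _ => @subsetT _ X)).1 (smallest_sigma_algebra setT G).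
Qed.

Section SupNorm.
Context {R : realType} {d : nat}.
Implicit Types (x y : 'rV[R]_d) (a r : R).

Lemma coord_le_mx_norm x i : `|x ord0 i| <= `|x|.
Proof. by rewrite [leRHS]/Num.norm /= mx_normrE; apply/bigmax_geP; right; exists (ord0, i). Qed.

Lemma mx_norm_le_coord x a : 0 <= a -> (forall i, `|x ord0 i| <= a) -> `|x| <= a.
Proof.
move=> a0 xa; rewrite [leLHS]/Num.norm /= mx_normrE; apply/bigmax_leP; split => // -[i j] _ /=.
by rewrite (ord1 i).
Qed.

Lemma boxP a x : 0 <= a -> box a x <-> `|x| <= a.
Proof.
move=> a0; split => [xa | xa i].
  by apply: mx_norm_le_coord => // i; rewrite ler_norml; exact: xa.
by rewrite -ler_norml; exact: le_trans (coord_le_mx_norm _ _) xa.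
Qed.

Lemma boxE a : 0 <= a -> box a = closed_ball_ Num.norm (0 : 'rV[R]_d) a.
Proof. by move=> a0; apply/seteqP; split => x; rewrite /closed_ball_ /= sub0r normrN boxP. Qed.

Lemma closed_ball_borel y r : borelRd (closed_ball_ Num.norm y r).
Proof.
have /(@sub_sigma_algebra _ setT) := closed_openC (@closed_closed_ball_ _ _ y r).
by move/sigma_algebraCD; rewrite setTD setCK.
Qed.

Lemma box_borel a : 0 <= a -> borelRd (box (d:=d) a).
Proof. by move=> a0; rewrite boxE //; exact: closed_ball_borel. Qed.

Lemma npts_eq0 (S A : set 'rV[R]_d) : npts S A = 0%E <-> S `&` A = set0.
Proof.
split=> [|SA0]; last by rewrite /npts SA0 esum_set0.
apply: contraPP => /eqP /set0P [x Sx].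
rewrite /npts (esumID [set x]) // (_ : _ `&` [set x] = [set x]); last first.
  by apply/seteqP; split => [z [] //|z -> //].
rewrite esum_set1 // => /eqP; rewrite padde_eq0 ?esum_ge0 //.
by case/andP; rewrite eqe oner_eq0.
Qed.

End SupNorm.

Section Grid.
Context {R : realType} {d : nat}.

Definition grid_point (s : R) m (f : {ffun 'I_d -> 'I_m}) : 'rV[R]_d :=
  \row_i (s * (f i)%:R).

Definition grid (s : R) (m : nat) : seq 'rV[R]_d :=
  [seq grid_point s f | f <- enum {ffun 'I_d -> 'I_m}].

Lemma size_grid s m : size (grid s m) = (m ^ d)%N.
Proof. by rewrite size_map -cardE card_ffun !card_ord. Qed.

Lemma grid_point_sep s m (f g : {ffun 'I_d -> 'I_m}) : 0 <= s -> f != g ->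
  s <= `|grid_point s f - grid_point s g|.
Proof.
move=> s0 fg; have [i fgi] : exists i, f i != g i.
  apply/existsP; apply: contraNT fg => /existsPn fg.
  by apply/eqP/ffunP => i; apply/eqP/negPn/fg.
apply: le_trans (coord_le_mx_norm _ i); rewrite !mxE -mulrBr normrM ger0_norm //.
rewrite -{1}[s]mulr1 ler_wpM2l //.
have [lt|lt|eq] := ltngtP (f i) (g i); last by rewrite (val_inj eq) eqxx in fgi.
- by rewrite distrC -natrB ?(ltnW lt) // ger0_norm ?ler0n // ler1n subn_gt0.
- by rewrite -natrB ?(ltnW lt) // ger0_norm ?ler0n // ler1n subn_gt0.
Qed.

Lemma grid_sep s m x y : 0 <= s -> x \in grid s m -> y \in grid s m -> x != y ->
  s <= `|x - y|.
Proof.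
move=> s0 /mapP [f _ ->] /mapP [g _ ->] fg; apply: grid_point_sep => //.
by apply: contraNneq fg => ->.
Qed.

Lemma uniq_grid s m : 0 < s -> uniq (grid s m).
Proof.
move=> s0; rewrite map_inj_in_uniq ?enum_uniq // => f g _ _ fg.
apply/eqP; apply: contraTT (s0) => /(grid_point_sep (ltW s0)).
by rewrite fg subrr normr0 -leNgt.
Qed.

Lemma grid_norm s m x : 0 <= s -> x \in grid s m -> `|x| <= s * m.-1%:R.
Proof.
move=> s0 /mapP [f _ ->]; apply: mx_norm_le_coord => [|i].
  by rewrite mulr_ge0.
rewrite mxE ger0_norm ?mulr_ge0 // ler_wpM2l // ler_nat -ltnS prednK //.
by apply: leq_ltn_trans (ltn_ord (f i)).
Qed.

Lemma grid_cover (n : nat) y : box n%:R y ->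
  exists2 z, z \in grid 1 (n + n).+1 & `|z - const_mx n%:R - y| <= 1/2.
Proof.
move=> yn; pose t i := Num.truncn (y ord0 i + n%:R + 1/2).
have t0 i : 0 <= y ord0 i + n%:R + 1/2 by have /andP[] := yn i; lra.
have tn i : (t i < (n + n).+1)%N.
  rewrite ltnS truncn_le_nat -[(n + n).+1]addn1 !natrD.
  by have /andP[] := yn i; lra.
exists (grid_point 1 [ffun i => inord (t i) : 'I_(n + n).+1]).
  by apply: map_f; rewrite mem_enum.
apply: mx_norm_le_coord => // i; rewrite !mxE ffunE inordK // mul1r ler_norml.
have := truncn_itv (t0 i); rewrite -/(t i) -[(t i).+1]addn1 natrD.
by move=> /andP[t_le t_gt]; apply/andP; split; lra.
Qed.

End Grid.

Section VoidBalls.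
Context {R : realType} {d : nat} {dO : measure_display} {Omega : measurableType dO}.
Variable hat : Omega -> set 'rV[R]_d.

Definition void_ball (y : 'rV[R]_d) : set Omega :=
  [set w | hat w `&` closed_ball_ Num.norm y (1/2) = set0].

Definition void_balls (L : seq 'rV[R]_d) : set Omega :=
  \big[setI/setT]_(y <- L) void_ball y.

Lemma void_ballsP L w : void_balls L w <-> forall y, y \in L -> void_ball y w.
Proof. by rewrite /void_balls -bigcap_seq. Qed.

Lemma void_eventE l : void_event hat l = [set w | hat w `&` box l = set0].
Proof. by apply/seteqP; split => w; rewrite /void_event /= npts_eq0. Qed.

Lemma void_event_half : void_event hat (1/2) = void_ball 0.
Proof. by rewrite void_eventE boxE. Qed.

Lemma void_event_sub_grid s m l : 0 <= s -> s * m.-1%:R + 1/2 <= l ->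
  void_event hat l `<=` void_balls (grid s m).
Proof.
move=> s0 sml w; rewrite void_eventE /= => /disjoints_subset hw.
apply/void_ballsP => y /(grid_norm s0) ys; apply/disjoints_subset => z /hw zl yz.
apply: zl; move: yz; rewrite /closed_ball_ /= boxP; last by have := mulr_ge0 s0 (ler0n R m.-1); lra.
have : `|z| <= `|y| + `|y - z| by rewrite -{1}(subKr y z) ler_normB.
lra.
Qed.

Lemma grid_void_balls_sub n :
  void_balls [seq z - const_mx n%:R | z <- grid 1 (n + n).+1] `<=` void_event hat n%:R.
Proof.
move=> w /void_ballsP hw; rewrite void_eventE /=.
apply/disjoints_subset => y hy /grid_cover [z zg zy].
have /disjoints_subset /(_ y hy) := hw _ (map_f (fun z => z - const_mx n%:R) zg).
by apply; rewrite /closed_ball_ /=.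
Qed.

Lemma hat_eq0_bigcap : [set w | hat w = set0] = \bigcap_(n : nat) void_event hat n%:R.
Proof.
apply/seteqP; split => w /= hw.
  by move=> n _; rewrite void_eventE /= hw set0I.
apply/seteqP; split => [y hy|//]; have := hw (Num.truncn `|y|).+1 I.
rewrite void_eventE => /disjoints_subset /(_ y hy); apply.
by rewrite boxP // ltW // truncnS_gt.
Qed.

Lemma void_event_dim0 l : d = 0%N -> void_event hat l = [set w | hat w = set0].
Proof.
move=> d0; have boxT : box (d:=d) l = setT.
  by apply/seteqP; split => // x _ i; move: (ltn_ord i); rewrite {2}d0.
by rewrite void_eventE boxT; apply/seteqP; split => w; rewrite /= setIT.
Qed.

Lemma tail_void_ball a y : 0 <= a -> a + 1/2 < `|y| -> tail_sigma hat a (void_ball y).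
Proof.
move=> a0 ya; apply: sub_sigma_algebra.
exists (closed_ball_ Num.norm y (1/2)), [set 0%E]; split; first exact: closed_ball_borel.
split; first exact: emeasurable_set1.
rewrite setIidl => [|z]; first by apply/seteqP; split => w /=; rewrite npts_eq0.
rewrite /closed_ball_ /= boxP // => yz za.
have : `|y| <= `|z| + `|y - z| by rewrite -{1}(subrK z y) addrC ler_normD.
lra.
Qed.

Lemma tail_void_balls a L : 0 <= a -> (forall y, y \in L -> a + 1/2 < `|y|) ->
  tail_sigma hat a (void_balls L).
Proof.
move=> a0; elim: L => [|y L IH] La; rewrite /void_balls ?big_nil ?big_cons.
  exact: g_sigma_setT.
apply: g_sigma_setI; first by apply: tail_void_ball => //; apply: La; rewrite mem_head.
by apply: IH => z zL; apply: La; rewrite inE zL orbT.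
Qed.

Hypothesis hat_spp : simple_point_process hat.

Lemma measurable_npts_eq0 A : borelRd A -> measurable [set w | npts (hat w) A = 0%E].
Proof.
move=> bA; rewrite -(setTI [set w | _]).
exact: hat_spp.2 bA measurableT _ (emeasurable_set1 _).
Qed.

Lemma measurable_void_ball y : measurable (void_ball y).
Proof.
rewrite (_ : void_ball y = [set w | npts (hat w) (closed_ball_ Num.norm y (1/2)) = 0%E]).
  by apply: measurable_npts_eq0; exact: closed_ball_borel.
by apply/seteqP; split => w /=; rewrite npts_eq0.
Qed.

Lemma measurable_void_balls L : measurable (void_balls L).
Proof.
rewrite /void_balls; elim/big_ind: _ => //; first exact: measurableI.
by move=> y _; exact: measurable_void_ball.
Qed.

Lemma measurable_void_event l : 0 <= l -> measurable (void_event hat l).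
Proof. by move=> l0; apply: measurable_npts_eq0; exact: box_borel. Qed.

End VoidBalls.

Section ProbabilityFacts.
Context {R : realType} {dT : measure_display} {T : measurableType dT}.

Lemma probability_setI_full (P : probability T R) (A B : set T) :
  measurable A -> measurable B -> P A = 1%E -> P (B `&` A) = P B.
Proof.
move=> mA mB PA1; rewrite [RHS](measureDI P mB mA) -[LHS]add0e; congr (_ + _)%E.
apply/eqP; rewrite eq_le measure_ge0 /=.
have : (P (B `\` A) <= P (~` A))%E.
  by rewrite le_measure ?inE //; [exact: measurableD | exact: measurableC].
by rewrite probability_setC // PA1 subee.
Qed.

Lemma probability_bigcap_full (P : probability T R) (F : (set T)^nat) :
  (forall n, measurable (F n)) -> (forall n, P (F n) = 1%E) -> P (\bigcap_n F n) = 1%E.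
Proof.
move=> mF PF1; have mcapF : measurable (\bigcap_n F n) by exact: bigcapT_measurable.
suff PC0 : P (~` \bigcap_n F n) = 0%E.
  by rewrite -[\bigcap_n F n]setCK probability_setC ?PC0 ?sube0 //; exact: measurableC.
apply/eqP; rewrite eq_le measure_ge0 andbT setC_bigcap.
apply: le_trans (measure_sigma_subadditive P (fun n => measurableC (mF n)) _ (@subset_refl _ _)) _.
  by apply: bigcupT_measurable => n; exact: measurableC.
by rewrite eseries0 // => n _ _ /=; rewrite probability_setC // PF1 subee.
Qed.

Lemma integral_le_cst_ae (mu : measure T R) (B : set T) (g : T -> R) (q : R) :
  measurable B -> 0 <= q -> measurable_fun B (EFin \o g) ->
  {ae mu, forall w, g w <= q} -> (\int[mu]_(w in B) (g w)%:E <= q%:E * mu B)%E.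
Proof.
move=> mB q0 mg gq; rewrite integralE -integral_cst //.
apply: le_trans (geeDl _ _) _.
  by rewrite oppe_le0; apply: integral_ge0 => w _; exact: funeneg_ge0.
apply: ae_ge0_le_integral => //; first exact: measurable_funepos.
by apply: filterS gq => w gw _ /=; rewrite funeposE ge_max !lee_fin gw q0.
Qed.

Lemma ae_le_of_ess_sup_cvg0 (mu : measure T R) (g : nat -> T -> R) (p q : R) :
  p < q -> (fun k => ess_sup mu (fun w => (`|g k w - p|)%:E)) @ \oo --> 0%E ->
  exists k, {ae mu, forall w, g k w <= q}.
Proof.
move=> pq g_cvg.
have near0 : nbhs (0%E : \bar R) [set y | (y < (q - p)%:E)%E].
  by apply: open_nbhs_nbhs; split; [exact: open_ereal_lt_ereal | rewrite /= lte_fin subr_gt0].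
have [k _ /(_ k (leqnn k)) /= /ltW /ess_supP gk] := g_cvg _ near0.
exists k; apply: filterS gk => w; rewrite lee_fin => /(le_trans (ler_norm _)).
by rewrite lerD2r.
Qed.

End ProbabilityFacts.

Section RealFacts.
Context {R : realType}.

Lemma exprn_le_expR_ln (q x : R) (m d : nat) : 0 < q < 1 -> 0 <= x <= m%:R ->
  q ^+ (m ^ d) <= expR (ln q * x ^+ d).
Proof.
move=> /andP[q0 q1] /andP[x0 xm].
rewrite -[q in q ^+ _]lnK ?posrE // -expRM_natl ler_expR mulrC natrX.
by apply: ler_wnM2l; [rewrite ln_le0 // ltW | rewrite lerXn2r ?nnegrE ?ler0n].
Qed.

Lemma expR_neg_le_powR (c alpha : R) (d : nat) : 0 < c -> (0 < d)%N ->
  exists2 kappa, 0 < kappa & forall l, 1 <= l -> expR (- (c * l ^+ d)) <= kappa * l `^ (- alpha).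
Proof.
move=> c0 d0; pose N := (Num.truncn alpha).+1.
have Nfact_gt0 : 0 < N`!%:R :> R by rewrite ltr0n fact_gt0.
have cN_gt0 : 0 < c ^+ N by rewrite exprn_gt0.
exists (N`!%:R / c ^+ N); first by rewrite divr_gt0.
move=> l l1; have l0 : 0 < l by lra.
rewrite powRN expRN -invf_div lef_pV2 ?posrE ?expR_gt0 ?divr_gt0 ?powR_gt0 //.
have l_alpha : l `^ alpha <= l ^+ N.
  rewrite -powR_mulrn; last exact: ltW.
  by apply: ler_powR => //; exact/ltW/truncnS_gt.
apply: le_trans (ler_wpM2r _ l_alpha) _; first by rewrite invr_ge0 ltW // divr_gt0.
have -> : l ^+ N * (N`!%:R / c ^+ N)^-1 = (c * l) ^+ N / N`!%:R.
  by rewrite invf_div exprMn; field; rewrite !gt_eqF.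
apply: le_trans (_ : expR (c * l) <= _).
  apply: le_trans (expR_ge1Dxn (Num.truncn alpha) _); first by rewrite lerDr.
  by rewrite mulr_ge0 ?ltW.
by rewrite ler_expR; apply: ler_wpM2l; [exact: ltW | exact: ler_eXnr].
Qed.

End RealFacts.

Section Stationarity.
Context {R : realType} {d : nat} {dO : measure_display} {Omega : measurableType dO}.
Variables (P : probability Omega R) (theta : 'rV[R]_d -> Omega -> Omega).
Variable hat : Omega -> set 'rV[R]_d.
Hypothesis hat_spp : simple_point_process hat.
Hypothesis theta_meas : forall x, measurable_fun setT (theta x).
Hypothesis P_theta : forall x B, measurable B -> P (theta x @^-1` B) = P B.
Variable Om : set Omega.
Hypotheses (mOm : measurable Om) (POm : P Om = 1%E).
Hypothesis hat_theta : forall x w, Om w -> hat (theta x w) = translate (hat w) x.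

Lemma void_ball_theta x y w : Om w -> void_ball hat y (theta x w) <-> void_ball hat (y + x) w.
Proof.
move=> Ow; rewrite /void_ball /= hat_theta // !disjoints_subset.
have ball_shift z : closed_ball_ Num.norm y (1/2) (z - x) = closed_ball_ Num.norm (y + x) (1/2) z.
  by rewrite /closed_ball_ /= opprB addrA.
split=> [yw z hz | yxw _ [z hz <-]] /=.
  by rewrite -ball_shift; apply: (yw (z - x)); exists z.
by rewrite ball_shift; exact: yxw.
Qed.

Lemma void_balls_theta x L w : Om w ->
  void_balls hat L (theta x w) <-> void_balls hat [seq y + x | y <- L] w.
Proof.
move=> Ow; rewrite !void_ballsP; split => [Lw _ /mapP [y yL ->] | Lw y yL].
  by apply/void_ball_theta => //; exact: Lw.
by apply/void_ball_theta => //; apply: Lw; exact: map_f.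
Qed.

Lemma P_void_balls_shift x L : P (void_balls hat [seq y + x | y <- L]) = P (void_balls hat L).
Proof.
have mL := measurable_void_balls hat_spp L.
have mthetaL : measurable (theta x @^-1` void_balls hat L).
  by rewrite -(setTI (_ @^-1` _)); exact: theta_meas.
rewrite -(P_theta x mL) -(probability_setI_full mOm mthetaL POm).
rewrite -(probability_setI_full mOm (measurable_void_balls hat_spp _) POm); congr (P _).
by apply/seteqP; split => w [Lw Ow]; split => //; exact/(void_balls_theta x L Ow).
Qed.

Lemma P_void_event_half_lt1 :
  P [set w | hat w = set0] = 0%E -> (P (void_event hat (1/2)) < 1)%E.
Proof.
move=> P_hat0; rewrite ltNge; apply/negP => P_half1.
have mball := measurable_void_ball hat_spp.
have mballs := measurable_void_balls hat_spp.
have mevent n : measurable (void_event hat n%:R) := measurable_void_event hat_spp (ler0n _ n).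
have P_ball1 y : P (void_ball hat y) = 1%E.
  apply/eqP; rewrite eq_le probability_le1 //=.
  have := P_void_balls_shift y [:: 0]; rewrite /void_balls /= !big_seq1 add0r => ->.
  by rewrite -void_event_half.
have P_balls1 L : P (void_balls hat L) = 1%E.
  elim: L => [|z L IH]; first by rewrite /void_balls big_nil probability_setT.
  by rewrite /void_balls big_cons (probability_setI_full (mballs L) (mball z) IH).
have P_event1 n : P (void_event hat n%:R) = 1%E.
  apply/eqP; rewrite eq_le probability_le1 //=.
  rewrite -(P_balls1 [seq z - const_mx n%:R | z <- grid 1 (n + n).+1]).
  by rewrite le_measure ?inE //; exact: grid_void_balls_sub.
move: P_hat0; rewrite hat_eq0_bigcap probability_bigcap_full // => /eqP.
by rewrite onee_eq0.
Qed.

Section Decoupling.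
Variables (a q : R) (g : Omega -> R).
Hypotheses (a0 : 0 <= a) (q0 : 0 <= q).
Hypothesis g_cond : cond_prob_version P (tail_sigma hat a) (void_event hat (1/2)) g.
Hypothesis g_le : {ae P, forall w, g w <= q}.

Lemma P_void_ball0_balls_le L : (forall y, y \in L -> a + 1/2 < `|y|) ->
  (P (void_ball hat 0 `&` void_balls hat L) <= q%:E * P (void_balls hat L))%E.
Proof.
move=> La; rewrite -void_event_half -(g_cond.2.2 _ (tail_void_balls (hat:=hat) a0 La)).
apply: integral_le_cst_ae => //; first exact: measurable_void_balls.
exact: measurable_funS (measurable_int _ g_cond.2.1).
Qed.

Lemma P_void_balls_le_pow L : uniq L ->
  {in L &, forall x y, x != y -> a + 1/2 < `|x - y|} ->
  (P (void_balls hat L) <= (q ^+ size L)%:E)%E.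
Proof.
elim: L => [|x L IH] /=; first by rewrite /void_balls big_nil probability_setT expr0.
case/andP => xL uL sepL.
have -> : x :: L = [seq y + x | y <- 0 :: [seq y - x | y <- L]].
  by rewrite /= add0r -map_comp map_id_in // => y _ /=; rewrite subrK.
rewrite P_void_balls_shift /void_balls big_cons -/(void_balls _ _).
apply: le_trans (P_void_ball0_balls_le _) _.
  move=> _ /mapP [y yL ->]; apply: sepL; rewrite ?inE ?yL ?eqxx ?orbT //.
  by apply: contraNneq xL => <-.
rewrite P_void_balls_shift exprS EFinM lee_wpmul2l ?lee_fin //.
by apply: IH => // y z yL zL; apply: sepL; rewrite inE ?yL ?zL orbT.
Qed.

Lemma P_void_event_le_expR : 0 < q < 1 ->
  exists2 c, 0 < c & forall l, 1 <= l -> (P (void_event hat l) <= (expR (- (c * l ^+ d)))%:E)%E.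
Proof.
move=> /andP[q_gt0 q1]; set s := a + 1; have s_gt0 : 0 < s by rewrite /s ltr_wpDl.
have s2_gt0 : 0 < 2 * s by rewrite mulr_gt0.
exists (- ln q / (2 * s) ^+ d); first by rewrite divr_gt0 ?oppr_gt0 ?ln_lt0 ?q_gt0 ?exprn_gt0.
move=> l l1; set m := (Num.truncn ((l - 1/2) / s)).+1.
have lt_ge0 : 0 <= (l - 1/2) / s by rewrite divr_ge0 //; lra.
have sm : s * m.-1%:R + 1/2 <= l.
  have : m.-1%:R <= (l - 1/2) / s by rewrite truncn_le.
  by rewrite ler_pdivlMr // mulrC; lra.
have lm : 0 <= l / (2 * s) <= m%:R.
  rewrite divr_ge0 ?(ltW s2_gt0) //=; last by lra.
  apply: le_trans (ltW (truncnS_gt _)).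
  by rewrite invfM mulrA ler_pM2r ?invr_gt0 //; lra.
apply: (@le_trans _ _ (P (void_balls hat (grid s m)))).
  have mevent : measurable (void_event hat l) by apply: measurable_void_event => //; lra.
  rewrite le_measure ?inE //; first exact: measurable_void_balls.
  exact: void_event_sub_grid (ltW s_gt0) sm.
apply: le_trans (P_void_balls_le_pow (uniq_grid _ s_gt0) _) _.
  move=> x y xg yg xy; apply: lt_le_trans (grid_sep (ltW s_gt0) xg yg xy); rewrite /s; lra.
have -> : - (- ln q / (2 * s) ^+ d * l ^+ d) = ln q * (l / (2 * s)) ^+ d.
  by rewrite expr_div_n; field; rewrite expf_neq0 // gt_eqF.
by rewrite size_grid lee_fin exprn_le_expR_ln // q_gt0.
Qed.

End Decoupling.

End Stationarity.

Theorem proposition4p7 (R : realType) (d : nat) (dO : measure_display)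
  (Omega : measurableType dO) (P : probability Omega R)
  (theta : 'rV[R]_d -> Omega -> Omega) (hat : Omega -> set 'rV[R]_d) :
  measurable_action theta ->
  simple_point_process hat ->
  A1 P theta hat -> A2 P hat -> A3 P theta hat ->
  (exists g : nat -> Omega -> R,
     (forall k : nat, cond_prob_version P (tail_sigma hat k%:R)
                        (void_event hat (1 / 2)) (g k)) /\
     ((fun k : nat => ess_sup P
         (fun w => (`| g k w - fine (P (void_event hat (1 / 2))) |)%:E))
        @ \oo --> 0%E)) ->
  (exists c : R, 0 < c /\
     forall l : R, 1 <= l -> (P (void_event hat l) <= (expR (- (c * l ^+ d)))%:E)%E)
  /\ (forall alpha : R, 0 < alpha -> condC P hat alpha).
Proof.
move=> [_ [_ [theta_meas _]]] hat_spp [P_theta P_hat0] _ [Om [mOm [POm [_ hat_theta]]]].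
move=> [g [g_cond g_cvg]].
have mV : measurable (void_event hat (1/2)) by apply: measurable_void_event => //; lra.
set p := fine (P (void_event hat (1/2))) in g_cvg.
have p_ge0 : 0 <= p by rewrite fine_ge0.
have p_lt1 : p < 1.
  rewrite -lte_fin fineK ?fin_num_measure //.
  exact: (P_void_event_half_lt1 hat_spp theta_meas P_theta mOm POm hat_theta P_hat0).
set q := (1 + p) / 2; have q01 : 0 < q < 1 by apply/andP; split; rewrite /q; lra.
have pq : p < q by rewrite /q; lra.
have [k g_le] := ae_le_of_ess_sup_cvg0 pq g_cvg.
have [c c_gt0 decay] := P_void_event_le_expR hat_spp theta_meas P_theta mOm POm hat_theta
  (ler0n R k) (ltW (andP q01).1) (g_cond k) g_le q01.
split; first by exists c.
move=> alpha _; have [d0 | d_gt0] := posnP d.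
  by exists 1; split => // l _; rewrite void_event_dim0 // P_hat0 lee_fin mul1r powR_ge0.
have [kappa kappa_gt0 kappa_bound] := expR_neg_le_powR alpha c_gt0 d_gt0.
exists kappa; split => // l l1; apply: le_trans (decay l l1) _.
by rewrite lee_fin kappa_bound.
Qed.
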